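(* In the setting of the context, for each $u\in U$ let $\mathbf{I}_u$ indicate whether $u$ is matched by MMP-ALG after the $T$ online rounds, and let $x^*_u=\sum_{e\in E(u)}x^*_e$. Then, when $T\to\infty$ and $|U|=o(\sqrt{T})$, the random variables $\{\mathbf{I}_u:u\in U\}$ are asymptotically independent and each satisfies $\Pr[\mathbf{I}_u=1]\to 1-e^{-x^*_u}$.
   Context: Bipartite graph $G=(U,V,E)$; online rounds $t=1,\dots,T$, in each of which independently at most one $v\in V$ arrives, $v$ with probability $p_v$, $\sum_v p_v\le1$, $r_v=Tp_v\in[0,1]$. Each $u\in U$ can be matched at most once. $E(w)$ denotes the set of edges incident to $w$. $\mathbf{x}^*\in[0,1]^E$ satisfies $\sum_{e\in E(v)}x^*_e\le r_v$ for all $v\in V$ and $\sum_{e\in E(u)}x^*_e\le1$ for all $u\in U$. MMP-ALG: when $v$ arrives, sample at most one edge $e\in E(v)$, each $e$ with probability $x^*_e/r_v$; if $e=(u,v)$ is sampled and $u$ is still unmatched, match $e$, otherwise skip. *)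

From HB Require Import structures.
From mathcomp Require Import all_boot all_order all_algebra.
From mathcomp Require Import all_classical all_reals all_analysis.
Set Implicit Arguments. Unset Strict Implicit. Unset Printing Implicit Defensive.
Import Order.TTheory GRing.Theory Num.Theory.
Local Open Scope ring_scope.

Definition rate (R : realFieldType) (V : finType) (T : nat) (p : V -> R) (v : V) : R :=
  T%:R * p v.

Definition xstar_u (R : realFieldType) (U V : finType) (E : {set U * V})
  (x : U * V -> R) (u : U) : R :=
  \sum_(v | (u, v) \in E) x (u, v).

(* Outcome of one round: None = nobody arrives;
   Some (v, None) = v arrives and no edge is sampled;
   Some (v, Some u) = v arrives and edge (u, v) is sampled. *)
Definition round_outcome (U V : finType) := option (V * option U).

Definition round_prob (R : realFieldType) (U V : finType) (E : {set U * V})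
  (p : V -> R) (x : U * V -> R) (T : nat) (o : round_outcome U V) : R :=
  match o with
  | None => 1 - \sum_(v : V) p v
  | Some (v, None) =>
      p v * (1 - \sum_(u | (u, v) \in E) x (u, v) / rate T p v)
  | Some (v, Some u) =>
      if (u, v) \in E then p v * (x (u, v) / rate T p v) else 0
  end.

(* One step of MMP-ALG on the set M of matched vertices of U. *)
Definition mmp_step (U V : finType) (M : {set U}) (o : round_outcome U V) : {set U} :=
  match o with
  | Some (_, Some u) => if u \in M then M else (u |: M)%SET
  | _ => M
  end.

Definition mmp_run (U V : finType) (T : nat)
  (w : {ffun 'I_T -> round_outcome U V}) : {set U} :=
  foldl (@mmp_step U V) finset.set0 [seq w t | t <- enum 'I_T].

Definition path_prob (R : realFieldType) (U V : finType) (E : {set U * V})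
  (p : V -> R) (x : U * V -> R) (T : nat)
  (w : {ffun 'I_T -> round_outcome U V}) : R :=
  \prod_(t < T) round_prob E p x T (w t).

Definition mmp_marg (R : realFieldType) (U V : finType) (E : {set U * V})
  (p : V -> R) (x : U * V -> R) (T : nat) (u : U) : R :=
  \sum_(w : {ffun 'I_T -> round_outcome U V} | u \in mmp_run w) path_prob E p x w.

Definition mmp_joint (R : realFieldType) (U V : finType) (E : {set U * V})
  (p : V -> R) (x : U * V -> R) (T : nat) (b : {ffun U -> bool}) : R :=
  \sum_(w : {ffun 'I_T -> round_outcome U V} | [ffun u => u \in mmp_run w] == b)
     path_prob E p x w.

Definition mmp_prodmarg (R : realFieldType) (U V : finType) (E : {set U * V})
  (p : V -> R) (x : U * V -> R) (T : nat) (b : {ffun U -> bool}) : R :=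
  \prod_(u : U) (if b u then mmp_marg E p x T u else 1 - mmp_marg E p x T u).

Definition mmp_tv (R : realFieldType) (U V : finType) (E : {set U * V})
  (p : V -> R) (x : U * V -> R) (T : nat) : R :=
  2^-1 * \sum_(b : {ffun U -> bool}) `|mmp_joint E p x T b - mmp_prodmarg E p x T b|.

Definition feasible_instance (R : realFieldType) (U V : finType) (E : {set U * V})
  (p : V -> R) (x : U * V -> R) (T : nat) : Prop :=
  [/\ (forall v, 0 <= p v),
      \sum_(v : V) p v <= 1 /\ (forall v, rate T p v <= 1),
      (forall e, e \in E -> 0 <= x e <= 1),
      (forall v, \sum_(u | (u, v) \in E) x (u, v) <= rate T p v) &
      (forall u, \sum_(v | (u, v) \in E) x (u, v) <= 1)].

(* In one round of MMP-ALG at most one vertex of U is hit: u with probability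
   q_u = x*_u / T, and nobody with the remaining probability.  The matched set after T rounds
   is the union of T independent hit sets, so its law is the T-th power of the one-round law
   for the union-convolution of laws on subsets of U; the zeta transform
   zeta f M = sum_{A <= M} f A turns union-convolution into pointwise product.  The same
   transform gives Pr[I_u = 1] = 1 - (1 - q_u)^T and shows that the product of these
   marginals is the T-th union-convolution power of the product of Bernoulli(q_u) laws.
   Union-convolution of laws is 1-Lipschitz in l1 in each argument, so the total variation
   distance is at most T/2 times the l1 distance between the one-round law and the product
   of Bernoulli(q_u) laws.  The latter is at most 2 (sum_u q_u)^2 <= 2 |U|^2 / T^2: both have
   mass 1, and by the Weierstrass product inequality the one-round law exceeds the product law
   only on singletons {u}, by at most q_u sum_w q_w.  Hence the distance is at most |U|^2 / T.
   Finally |(1 - x/T)^T - e^(-x)| <= 1/T for x in [0, 1]. *)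

From HB Require Import structures.
From mathcomp Require Import all_boot all_order all_algebra.
From mathcomp Require Import all_classical all_reals all_analysis.
From mathcomp Require Import ring lra.
Import numFieldNormedType.Exports.
Import Order.TTheory GRing.Theory Num.Theory.
Set Implicit Arguments. Unset Strict Implicit. Unset Printing Implicit Defensive.
Local Open Scope ring_scope.

Lemma sum_indicator_eq (R : pzSemiRingType) (I : finType) (P : pred I) (a : I) :
  \sum_(i | P i) ((a == i)%:R : R) = (P a)%:R.
Proof.
rewrite (big_mkcond P) (bigD1 a) //= eqxx big1 ?addr0; first by case: (P a).
by move=> i /negbTE; rewrite eq_sym => ->; case: (P i).
Qed.

Lemma sum_ffun_bool_set (R : nmodType) (T : finType) (F : {ffun T -> bool} -> R) :
  \sum_f F f = \sum_(A : {set T}) F [ffun u => u \in A].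
Proof.
rewrite (reindex (fun A : {set T} => [ffun u => u \in A])) //.
exists (fun f : {ffun T -> bool} => [set u | f u]) => [A|f] _ /=.
  by apply/setP => u; rewrite inE ffunE.
by apply/ffunP => u; rewrite ffunE inE.
Qed.

Section ZetaTransform.
Variables (R : comPzRingType) (U : finType).
Implicit Types (f g mu nu : {set U} -> R) (a : U -> R) (A B C M : {set U}).

Definition zeta f M := \sum_(A : {set U} | A \subset M) f A.

Lemma zeta_setT f : zeta f [set: U]%SET = \sum_A f A.
Proof. by apply: eq_bigl => A; rewrite finset.subsetT. Qed.

Lemma zeta_inj f g : zeta f =1 zeta g -> f =1 g.
Proof.
move=> fg M; have [n] := ubnP #|M|; elim: n M => // n IH M /ltnSE leMn.
have : zeta f M - zeta g M = 0 by rewrite fg subrr.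
rewrite /zeta -sumrB (bigD1 M) //= big1 ?addr0 => [/subr0_eq //|A /andP[sAM neAM]].
rewrite IH ?subrr //; apply: leq_trans leMn.
by rewrite proper_card // finset.properEneq neAM.
Qed.

Definition union_conv mu nu C :=
  \sum_(A : {set U}) \sum_(B : {set U}) (A :|: B == C)%:R * (mu A * nu B).

Lemma zeta_union_conv mu nu M :
  zeta (union_conv mu nu) M = zeta mu M * zeta nu M.
Proof.
rewrite /zeta /union_conv exchange_big /= big_distrl /= [RHS]big_mkcond /=.
apply: eq_bigr => A _; rewrite exchange_big /=.
have indicator B : \sum_(C : {set U} | C \subset M) (A :|: B == C)%:R * (mu A * nu B)
    = ((A \subset M) && (B \subset M))%:R * (mu A * nu B).
  by rewrite -big_distrl /= sum_indicator_eq finset.subUset.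
case: (boolP (A \subset M)) => sAM /=.
  rewrite big_distrr /= [RHS]big_mkcond /=; apply: eq_bigr => B _.
  by rewrite indicator sAM; case: (B \subset M); rewrite ?mul1r ?mul0r ?mulr0.
by rewrite big1 // => B _; rewrite indicator (negbTE sAM) mul0r.
Qed.

Lemma union_convB mu1 nu1 mu2 nu2 C :
  union_conv mu1 nu1 C - union_conv mu2 nu2 C =
  union_conv (fun A => mu1 A - mu2 A) nu1 C +
  union_conv mu2 (fun B => nu1 B - nu2 B) C.
Proof.
rewrite /union_conv -sumrB -big_split /=; apply: eq_bigr => A _.
rewrite -sumrB -big_split /=; apply: eq_bigr => B _.
by rewrite -mulrBr -mulrDr; congr (_ * _); rewrite mulrBl mulrBr addrA subrK.
Qed.

Fixpoint union_conv_pow n mu : {set U} -> R :=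
  if n is n'.+1 then union_conv (union_conv_pow n' mu) mu
  else fun A => (A == finset.set0)%:R.

Lemma zeta_union_conv_pow n mu M : zeta (union_conv_pow n mu) M = zeta mu M ^+ n.
Proof.
elim: n => [|n IH] /=; last by rewrite zeta_union_conv IH exprSr.
rewrite /zeta; under eq_bigr => A _ do rewrite eq_sym.
by rewrite sum_indicator_eq finset.sub0set.
Qed.

Definition indep_law a A := \prod_u (if u \in A then a u else 1 - a u).

Lemma zeta_indep_law a M : zeta (indep_law a) M = \prod_(u | u \notin M) (1 - a u).
Proof.
pose g u (b : bool) := if b then (if u \in M then a u else 0) else 1 - a u.
transitivity (\prod_u \sum_(b : bool) g u b); last first.
  rewrite [RHS]big_mkcond /=; apply: eq_bigr => u _.
  by rewrite big_bool /g; case: (u \in M); rewrite /= ?subrKC ?add0r.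
rewrite bigA_distr_bigA /= sum_ffun_bool_set /zeta [LHS]big_mkcond /=.
apply: eq_bigr => A _; rewrite /indep_law /g.
case: (boolP (A \subset M)) => [sAM|/fintype.subsetPn[u uA uM]].
  apply: eq_bigr => u _; rewrite ffunE; case: ifP => // uA.
  by rewrite (fintype.subsetP sAM u uA).
by rewrite (bigD1 u) //= ffunE uA (negbTE uM) mul0r.
Qed.

Lemma indep_law_pow n a :
  indep_law (fun u => 1 - (1 - a u) ^+ n) =1 union_conv_pow n (indep_law a).
Proof.
apply: zeta_inj => M; rewrite zeta_union_conv_pow !zeta_indep_law -prodrXl.
by apply: eq_bigr => u _; rewrite subKr.
Qed.

End ZetaTransform.

Section L1Norm.
Variables (R : numDomainType) (U : finType).
Implicit Types (f mu nu : {set U} -> R) (a : U -> R).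

Definition l1norm f := \sum_(A : {set U}) `|f A|.

Definition is_law f := (forall A, 0 <= f A) /\ \sum_(A : {set U}) f A = 1.

Lemma l1norm_law mu : is_law mu -> l1norm mu = 1.
Proof. by case=> mu_ge0 <-; apply: eq_bigr => A _; rewrite ger0_norm. Qed.

Lemma l1norm_union_conv mu nu : l1norm (union_conv mu nu) <= l1norm mu * l1norm nu.
Proof.
have -> : l1norm mu * l1norm nu =
    \sum_(C : {set U}) union_conv (fun A => `|mu A|) (fun B => `|nu B|) C.
  by rewrite -zeta_setT zeta_union_conv !zeta_setT.
apply: ler_sum => C _; apply: le_trans (ler_norm_sum _ _ _) _.
apply: ler_sum => A _; apply: le_trans (ler_norm_sum _ _ _) _.
by apply: ler_sum => B _; rewrite normrM normr_nat normrM.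
Qed.

Lemma is_law_union_conv_pow n mu : is_law mu -> is_law (union_conv_pow n mu).
Proof.
case=> mu_ge0 mu_sum; split.
  elim: n => [|n IH] A /=; first exact: ler0n.
  by apply: sumr_ge0 => B _; apply: sumr_ge0 => C _; rewrite !mulr_ge0.
by rewrite -zeta_setT zeta_union_conv_pow zeta_setT mu_sum expr1n.
Qed.

(* Union-convolution with a law is a contraction in l1, so the errors of the n factors add up. *)
Lemma l1norm_union_conv_pow_sub n mu nu : is_law mu -> is_law nu ->
  l1norm (fun A => union_conv_pow n mu A - union_conv_pow n nu A)
  <= n%:R * l1norm (fun A => mu A - nu A).
Proof.
move=> mu_law nu_law; elim: n => [|n IH] /=.
  by rewrite mul0r /l1norm big1 // => A; rewrite subrr normr0.
rewrite /l1norm; under eq_bigr => C _ do rewrite union_convB.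
apply: le_trans (ler_sum _ (fun C _ => ler_normD _ _)) _.
rewrite big_split /= mulrSr mulrDl mul1r; apply: lerD.
  by apply: le_trans (l1norm_union_conv _ _) _; rewrite (l1norm_law mu_law) mulr1.
apply: le_trans (l1norm_union_conv _ _) _.
by rewrite l1norm_law ?mul1r //; apply: is_law_union_conv_pow.
Qed.

Lemma is_law_indep_law a : (forall u, 0 <= a u <= 1) -> is_law (indep_law a).
Proof.
move=> a01; split=> [A|].
  by apply: prodr_ge0 => u _; case/andP: (a01 u) => ? ?; case: ifP; rewrite ?subr_ge0.
by rewrite -zeta_setT zeta_indep_law big_pred0 // => u; rewrite finset.in_setT.
Qed.

End L1Norm.

Lemma weierstrass_prod (R : realDomainType) (I : finType) (P : pred I) (a : I -> R) :
  (forall i, 0 <= a i <= 1) -> 1 - \sum_(i | P i) a i <= \prod_(i | P i) (1 - a i).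
Proof.
move=> a01.
suff [] : 1 - \sum_(i | P i) a i <= \prod_(i | P i) (1 - a i) /\ 0 <= \sum_(i | P i) a i by [].
elim/big_rec2: _ => [|i s r _ [le_s_r s_ge0]]; first by rewrite subr0.
have /andP[ai_ge0 ai_le1] := a01 i.
have : 0 <= (1 - a i) * (r - (1 - s)) by apply: mulr_ge0; rewrite subr_ge0.
have : 0 <= a i * s by apply: mulr_ge0.
by rewrite !mulrBr !mulrBl !mul1r; split; lra.
Qed.

Lemma sum_norm_sum0 (R : realDomainType) (I : finType) (f : I -> R) :
  \sum_i f i = 0 -> \sum_i `|f i| = 2 * \sum_i Num.max (f i) 0.
Proof.
move=> f_sum0; have normE i : `|f i| = 2 * Num.max (f i) 0 - f i.
  by case: (lerP 0 (f i)) => fi0; [rewrite ger0_norm | rewrite ltr0_norm]; lra.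
by rewrite (eq_bigr _ (fun i _ => normE i)) sumrB f_sum0 subr0 mulr_sumr.
Qed.

Lemma set0_neq_set1 (T : finType) (u : T) : (finset.set0 == [set u]) = false.
Proof. by apply/eqP => /setP /(_ u); rewrite !inE eqxx. Qed.

Section SmallSetLaw.
Variables (R : realDomainType) (U : finType) (a : U -> R) (alpha : {set U} -> R).
Hypotheses (a01 : forall u, 0 <= a u <= 1) (alpha_sum : \sum_(A : {set U}) alpha A = 1).
Hypotheses (alpha0 : alpha finset.set0 = 1 - \sum_u a u)
  (alpha1 : forall u, alpha [set u] = a u)
  (alpha_large : forall A : {set U}, (1 < #|A|)%N -> alpha A = 0).

Lemma pos_part_sub_indep_law (A : {set U}) : Num.max (alpha A - indep_law a A) 0 <=
  \sum_u a u * (\sum_w a w) * (A == [set u])%:R.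
Proof.
have a_ge0 u : 0 <= a u by case/andP: (a01 u).
set Q := \sum_w a w.
have [/cards0_eq-> | card_A_neq0] := eqVneq #|A| 0.
  rewrite big1 => [|u _]; last by rewrite set0_neq_set1 mulr0.
  rewrite max_r // alpha0 subr_le0 /indep_law.
  under [X in _ <= X]eq_bigr => u _ do rewrite finset.in_set0.
  exact: weierstrass_prod.
have [/eqP/cards1P[u ->] | card_A_neq1] := eqVneq #|A| 1.
  rewrite (bigD1 u) //= eqxx mulr1 big1 ?addr0; last first.
    by move=> w wu; rewrite (inj_eq set1_inj) eq_sym (negbTE wu) mulr0.
  rewrite ge_max mulr_ge0 ?a_ge0 ?sumr_ge0 // andbT alpha1 /indep_law (bigD1 u) //=.
  rewrite finset.in_set1 eqxx.
  under eq_bigr => w /negbTE wu do rewrite finset.in_set1 wu.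
  have := weierstrass_prod (fun w => w != u) a01.
  have : \sum_(w | w != u) a w <= Q by rewrite /Q [X in _ <= X](bigD1 u) //= lerDr.
  have := a_ge0 u; nra.
rewrite alpha_large; last by case: #|A| card_A_neq0 card_A_neq1 => [|[]].
rewrite sub0r max_r ?oppr_le0 ?(is_law_indep_law a01).1 //.
by apply: sumr_ge0 => u _; rewrite !mulr_ge0 ?sumr_ge0.
Qed.

Lemma l1norm_sub_indep_law :
  l1norm (fun A => alpha A - indep_law a A) <= 2 * (\sum_u a u) ^+ 2.
Proof.
rewrite /l1norm sum_norm_sum0; last by rewrite sumrB alpha_sum (is_law_indep_law a01).2 subrr.
set Q := \sum_u a u; rewrite ler_pM2l ?ltr0n // expr2 {1}/Q mulr_suml.
apply: le_trans (ler_sum _ (fun A _ => pos_part_sub_indep_law A)) _.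
rewrite exchange_big /=; apply: ler_sum => u _.
rewrite -big_distrr /= -/Q (bigD1 [set u]) //= eqxx big1 ?addr0 ?mulr1 //.
by move=> A /negbTE ->.
Qed.

End SmallSetLaw.

Lemma sum_option (R : nmodType) (X : finType) (F : option X -> R) :
  \sum_o F o = F None + \sum_y F (Some y).
Proof.
rewrite (bigD1 None) //=; congr (_ + _).
rewrite (reindex_omap Some id); last by case.
by apply: eq_bigl => y; rewrite eqxx.
Qed.

Lemma sum_pair (R : nmodType) (X Y : finType) (F : X * Y -> R) :
  \sum_z F z = \sum_i \sum_j F (i, j).
Proof. by rewrite pair_bigA; apply: eq_bigr => -[]. Qed.

Lemma natr_all (R : pzSemiRingType) (X : Type) (P : pred X) (s : seq X) :
  ((all P s)%:R : R) = \prod_(y <- s) (P y)%:R.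
Proof.
elim: s => [|y s IH] /=; first by rewrite big_nil.
by rewrite big_cons -mulnb natrM IH.
Qed.

Section MMP.
Variables (R : realFieldType) (U V : finType) (E : {set U * V}) (p : V -> R)
  (x : U * V -> R) (T : nat).
Hypotheses (T_gt0 : (0 < T)%N) (feasible : feasible_instance E p x T).

Local Notation rho := (round_prob E p x T).
Local Notation outcome := (round_outcome U V).
Local Notation path := {ffun 'I_T -> outcome}.
Implicit Types (S M A : {set U}) (o : outcome) (w : path).

Lemma p_ge0 v : 0 <= p v.
Proof. by case: feasible. Qed.

Lemma x_ge0 e : e \in E -> 0 <= x e.
Proof. by case: feasible => _ _ x01 _ _ /x01 /andP[]. Qed.

Lemma rate_ge0 v : 0 <= rate T p v.
Proof. by rewrite mulr_ge0 ?ler0n ?p_ge0. Qed.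

Lemma sum_sample_prob_le1 v : \sum_(u | (u, v) \in E) x (u, v) / rate T p v <= 1.
Proof.
rewrite -mulr_suml; have [->|rate_gt0] := eqVneq (rate T p v) 0.
  by rewrite invr0 mulr0 ler01.
rewrite ler_pdivrMr ?mul1r; first by case: feasible.
by rewrite lt0r rate_gt0 rate_ge0.
Qed.

Lemma round_prob_ge0 o : 0 <= rho o.
Proof.
case: o => [[v [u|]]|] /=.
- case: ifP => // uvE; rewrite mulr_ge0 ?p_ge0 ?divr_ge0 ?x_ge0 ?rate_ge0 //.
- by rewrite mulr_ge0 ?p_ge0 // subr_ge0 sum_sample_prob_le1.
- by rewrite subr_ge0; case: feasible => _ [].
Qed.

Lemma sum_round_prob : \sum_o rho o = 1.
Proof.
rewrite sum_option sum_pair /= -[RHS](subrK (\sum_v p v)); congr (_ + _).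
apply: eq_bigr => v _; rewrite sum_option /= -big_mkcond /= -mulr_sumr.
by rewrite mulrBr mulr1 subrK.
Qed.

Definition hit_prob u := xstar_u E x u / T%:R.

Lemma hit_prob_ge0 u : 0 <= hit_prob u.
Proof. by rewrite divr_ge0 ?ler0n // sumr_ge0 // => v /x_ge0. Qed.

Lemma hit_prob_le1 u : hit_prob u <= 1.
Proof.
rewrite ler_pdivrMr ?ltr0n // mul1r; case: feasible => _ _ _ _ /(_ u) /le_trans.
by apply; rewrite ler1n.
Qed.

Lemma hit_prob01 u : 0 <= hit_prob u <= 1.
Proof. by rewrite hit_prob_ge0 hit_prob_le1. Qed.

(* When [p v = 0] the sampling probability [x (u, v) / rate T p v] is the junk value [0];
   feasibility forces [x (u, v) = 0] there, so no mass is lost. *)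
Lemma sum_round_prob_hit u : \sum_v rho (Some (v, Some u)) = hit_prob u.
Proof.
rewrite /hit_prob /xstar_u mulr_suml /= -big_mkcond /=; apply: eq_bigr => v uvE.
have [pv0|pv_neq0] := eqVneq (p v) 0; last first.
  by rewrite /rate; field; rewrite pv_neq0 pnatr_eq0 -lt0n T_gt0.
have xuv0 : x (u, v) = 0.
  apply/eqP; rewrite eq_le x_ge0 // andbT.
  case: feasible => _ _ _ /(_ v) + _; rewrite /rate pv0 mulr0; apply: le_trans.
  by rewrite (bigD1 u) //= lerDl sumr_ge0 // => w /andP[/x_ge0].
by rewrite pv0 xuv0 !mul0r.
Qed.

Definition hit (o : outcome) : {set U} :=
  if o is Some (_, Some u) then [set u] else finset.set0.

Definition hit_law (A : {set U}) := \sum_o rho o * (hit o == A)%:R.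

Lemma zeta_hit_law M : zeta hit_law M = \sum_o rho o * (hit o \subset M)%:R.
Proof.
rewrite /zeta /hit_law exchange_big /=; apply: eq_bigr => o _.
by rewrite -mulr_sumr sum_indicator_eq.
Qed.

Lemma is_law_hit_law : is_law hit_law.
Proof.
split=> [A|]; first by rewrite sumr_ge0 // => o _; rewrite mulr_ge0 ?round_prob_ge0.
rewrite -zeta_setT zeta_hit_law -[RHS]sum_round_prob; apply: eq_bigr => o _.
by rewrite finset.subsetT mulr1.
Qed.

Lemma hit_law1 u : hit_law [set u] = hit_prob u.
Proof.
rewrite /hit_law sum_option /= set0_neq_set1 mulr0 add0r sum_pair /=.
rewrite -sum_round_prob_hit; apply: eq_bigr => v _.
rewrite sum_option /= set0_neq_set1 mulr0 add0r (bigD1 u) //= eqxx mulr1 big1 ?addr0 //.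
by move=> w wu; rewrite (inj_eq set1_inj) (negbTE wu) mulr0.
Qed.

Lemma hit_law_large (A : {set U}) : (1 < #|A|)%N -> hit_law A = 0.
Proof.
move=> card_A_gt1; apply: big1 => o _; case: eqP card_A_gt1 => [<-|_ _]; last by rewrite mulr0.
by case: o => [[v [u|]]|] /=; rewrite ?cards1 ?cards0.
Qed.

Lemma hit_law0 : hit_law finset.set0 = 1 - \sum_u hit_prob u.
Proof.
apply/eqP; rewrite -sum_round_prob eq_sym subr_eq; apply/eqP.
under [X in _ = _ + X]eq_bigr => u _ do rewrite -hit_law1.
rewrite /hit_law exchange_big -big_split /=; apply: eq_bigr => o _.
rewrite -mulr_sumr -mulrDr -[LHS]mulr1; congr (_ * _).
case: o => [[v [u|]]|] /=.
- rewrite eq_sym set0_neq_set1 add0r (bigD1 u) //= eqxx big1 ?addr0 // => w.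
  by rewrite (inj_eq set1_inj) eq_sym => /negbTE ->.
- by rewrite eqxx big1 ?addr0 // => w _; rewrite set0_neq_set1.
- by rewrite eqxx big1 ?addr0 // => w _; rewrite set0_neq_set1.
Qed.

Lemma zeta_hit_law_setC1 u : zeta hit_law [set~ u] = 1 - hit_prob u.
Proof.
rewrite zeta_hit_law -[X in _ = X - _]sum_round_prob -hit_law1 /hit_law -sumrB.
apply: eq_bigr => o _.
rewrite -[X in _ = X - _]mulr1 -mulrBr; congr (_ * _).
case: o => [[v [w|]]|] /=; rewrite ?finset.sub0set ?set0_neq_set1 ?subr0 //.
rewrite finset.sub1set in_setC1 (inj_eq set1_inj).
by case: eqVneq => /=; rewrite ?subrr ?subr0.
Qed.

Lemma mmp_step_hit S o : mmp_step S o = S :|: hit o.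
Proof.
case: o => [[v [u|]]|] /=; rewrite ?finset.setU0 //.
case: ifP => [uS|_]; last by rewrite finset.setUC.
by apply/esym/finset.setUidPl; rewrite finset.sub1set.
Qed.

Lemma foldl_mmp_step_subset (s : seq outcome) S M :
  (foldl (@mmp_step U V) S s \subset M) =
  (S \subset M) && all (fun o => hit o \subset M) s.
Proof.
elim: s S => [|o s IH] S /=; first by rewrite andbT.
by rewrite IH mmp_step_hit finset.subUset andbA.
Qed.

Lemma mmp_run_subset w M :
  ((mmp_run w \subset M)%:R : R) = \prod_t (hit (w t) \subset M)%:R.
Proof.
rewrite /mmp_run foldl_mmp_step_subset finset.sub0set /= all_map natr_all enumT.
by rewrite /index_enum unlock.
Qed.

Lemma sum_path_prob_prod (F : outcome -> R) :
  \sum_(w : path) path_prob E p x w * \prod_(t < T) F (w t) = (\sum_o rho o * F o) ^+ T.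
Proof.
under eq_bigr => w _ do rewrite /path_prob -big_split /=.
by rewrite -(bigA_distr_bigA (fun _ o => rho o * F o)) prodr_const card_ord.
Qed.

Lemma sum_path_prob_run_subset M :
  \sum_(w : path) path_prob E p x w * (mmp_run w \subset M)%:R = zeta hit_law M ^+ T.
Proof.
rewrite zeta_hit_law -sum_path_prob_prod.
by apply: eq_bigr => w _; rewrite mmp_run_subset.
Qed.

Definition final_law M := \sum_(w : path) path_prob E p x w * (mmp_run w == M)%:R.

Lemma final_law_pow : final_law =1 union_conv_pow T hit_law.
Proof.
apply: zeta_inj => M; rewrite zeta_union_conv_pow -sum_path_prob_run_subset.
rewrite /zeta /final_law exchange_big /=; apply: eq_bigr => w _.
by rewrite -mulr_sumr sum_indicator_eq.
Qed.

Lemma sum_path_prob : \sum_(w : path) path_prob E p x w = 1.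
Proof.
rewrite -(expr1n _ T) -is_law_hit_law.2 -zeta_setT -sum_path_prob_run_subset.
by apply: eq_bigr => w _; rewrite finset.subsetT mulr1.
Qed.

Lemma mmp_marg_eq u : mmp_marg E p x T u = 1 - (1 - hit_prob u) ^+ T.
Proof.
rewrite -zeta_hit_law_setC1 -sum_path_prob_run_subset -[X in X - _]sum_path_prob.
rewrite -sumrB /mmp_marg big_mkcond /=; apply: eq_bigr => w _.
rewrite finset.subsetC finset.sub1set finset.in_setC.
by case: (u \in mmp_run w); rewrite /= ?mulr1 ?mulr0 ?subr0 ?subrr.
Qed.

Lemma mmp_tv_eq : mmp_tv E p x T =
  2^-1 * l1norm (fun A => final_law A - indep_law (mmp_marg E p x T) A).
Proof.
rewrite /mmp_tv sum_ffun_bool_set; congr (_ * _); apply: eq_bigr => A _.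
congr `|_ - _|; last by apply: eq_bigr => u _; rewrite ffunE.
rewrite /mmp_joint big_mkcond /=; apply: eq_bigr => w _.
have -> : ([ffun u => u \in mmp_run w] == [ffun u => u \in A]) = (mmp_run w == A).
  apply/eqP/eqP => [/ffunP runA|-> //]; apply/setP => u.
  by have := runA u; rewrite !ffunE.
by case: (mmp_run w == A); rewrite ?mulr1 ?mulr0.
Qed.

Lemma indep_law_mmp_marg A :
  indep_law (mmp_marg E p x T) A = union_conv_pow T (indep_law hit_prob) A.
Proof. by rewrite -indep_law_pow; apply: eq_bigr => u _; rewrite mmp_marg_eq. Qed.

Lemma mmp_tv_le : mmp_tv E p x T <= T%:R * (\sum_u hit_prob u) ^+ 2.
Proof.
have := l1norm_sub_indep_law hit_prob01 is_law_hit_law.2 hit_law0 hit_law1 hit_law_large.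
have := l1norm_union_conv_pow_sub T is_law_hit_law (is_law_indep_law hit_prob01).
rewrite mmp_tv_eq.
have -> : l1norm (fun A => final_law A - indep_law (mmp_marg E p x T) A) =
    l1norm (fun A => union_conv_pow T hit_law A - union_conv_pow T (indep_law hit_prob) A).
  by apply: eq_bigr => A _; rewrite final_law_pow indep_law_mmp_marg.
set L := l1norm _; set D := l1norm _; set Q := \sum_u hit_prob u => le_L le_D.
have : T%:R * D <= T%:R * (2 * Q ^+ 2) by rewrite ler_wpM2l ?ler0n.
lra.
Qed.

Lemma sum_hit_prob_le : \sum_u hit_prob u <= #|U|%:R / T%:R.
Proof.
rewrite -mulr_suml ler_wpM2r ?invr_ge0 ?ler0n // -sum1_card natr_sum.
by apply: ler_sum => u _; case: feasible => _ _ _ _ /(_ u).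
Qed.

Lemma mmp_tv_le_card : mmp_tv E p x T <= #|U|%:R ^+ 2 / T%:R.
Proof.
apply: le_trans mmp_tv_le _.
have -> : #|U|%:R ^+ 2 / T%:R = T%:R * (#|U|%:R / T%:R) ^+ 2 :> R.
  by field; rewrite pnatr_eq0 -lt0n T_gt0.
rewrite ler_wpM2l ?ler0n // !expr2.
by apply: ler_pM; rewrite ?sum_hit_prob_le ?sumr_ge0 // => u _; apply: hit_prob_ge0.
Qed.

End MMP.

Lemma mmp_tv_ge0 (R : realFieldType) (U V : finType) (E : {set U * V}) (p : V -> R)
  (x : U * V -> R) (T : nat) : 0 <= mmp_tv E p x T.
Proof. by rewrite mulr_ge0 ?invr_ge0 ?ler0n ?sumr_ge0. Qed.

Lemma norm_exprB_le (R : realDomainType) (a b : R) n : 0 <= a <= 1 -> 0 <= b <= 1 ->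
  `|a ^+ n - b ^+ n| <= n%:R * `|a - b|.
Proof.
move=> /andP[a_ge0 a_le1] /andP[b_ge0 b_le1]; elim: n => [|n IH].
  by rewrite !expr0 subrr normr0 mul0r.
have -> : a ^+ n.+1 - b ^+ n.+1 = a * (a ^+ n - b ^+ n) + b ^+ n * (a - b).
  by rewrite !exprS; ring.
rewrite mulrSr mulrDl mul1r; apply: le_trans (ler_normD _ _) _.
rewrite !normrM (ger0_norm a_ge0) (ger0_norm (exprn_ge0 n b_ge0)).
apply: lerD; first by apply: le_trans IH; apply: ler_piMl.
by apply: ler_piMl; rewrite ?exprn_ile1.
Qed.

(* With [s = a / T]: [0 <= expR (- s) - (1 - s) <= s ^+ 2], and [T]-th powers of numbers in
   [[0, 1]] differ by at most [T] times as much. *)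
Lemma norm_expR_approx (R : realType) (a : R) (T : nat) : (0 < T)%N -> 0 <= a <= 1 ->
  `|(1 - a / T%:R) ^+ T - expR (- a)| <= T%:R^-1.
Proof.
move=> T_gt0 /andP[a_ge0 a_le1].
have T_pos : 0 < T%:R :> R by rewrite ltr0n.
have T_ge1 : 1 <= T%:R :> R by rewrite ler1n.
set s := a / T%:R.
have s_ge0 : 0 <= s by rewrite divr_ge0 // ltW.
have s_le1 : s <= 1 by rewrite ler_pdivrMr // mul1r (le_trans a_le1).
have -> : - a = T%:R * (- s) by rewrite /s; field; rewrite gt_eqF.
rewrite expRM_natl; set e := expR (- s).
have e_ge : 1 - s <= e by have := expR_ge1Dx (- s).
have : e * (1 + s) <= e * expR s by rewrite ler_wpM2l ?expR_ge1Dx ?ltW ?expR_gt0.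
rewrite /e -expRD addNr expR0 -/e => e_le.
have e_pos : 0 < e := expR_gt0 _.
have e_le1 : e <= 1 by nra.
have le_e_s2 : `|1 - s - e| <= s ^+ 2.
  by rewrite ler0_norm ?subr_le0 // expr2; nra.
have s01 : 0 <= 1 - s <= 1 by apply/andP; split; lra.
have e01 : 0 <= e <= 1 by rewrite e_le1 ltW.
apply: le_trans (norm_exprB_le T s01 e01) _.
apply: le_trans (ler_wpM2l (ler0n _ _) le_e_s2) _.
have -> : T%:R * s ^+ 2 = a ^+ 2 / T%:R by rewrite /s; field; rewrite gt_eqF.
by rewrite ler_pdivrMr // mulVf ?gt_eqF // expr2; nra.
Qed.

Local Open Scope classical_set_scope.
Local Open Scope ring_scope.

Theorem lemma2 (R : realType) (U V : nat -> finType)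
  (E : forall T, {set U T * V T}) (p : forall T, V T -> R)
  (x : forall T, U T * V T -> R) :
  (forall T, (0 < T)%N -> feasible_instance (E T) (p T) (x T) T) ->
  (fun T : nat => #|U T|%:R / Num.sqrt (T%:R : R)) @ \oo --> 0 ->
  (fun T : nat => mmp_tv (E T) (p T) (x T) T) @ \oo --> 0 /\
  (forall eps : R, 0 < eps -> \forall T \near \oo, forall u : U T,
     `| mmp_marg (E T) (p T) (x T) T u - (1 - expR (- xstar_u (E T) (x T) u)) | < eps).
Proof.
move=> feasible card_U_small; split.
  pose r T := #|U T|%:R / Num.sqrt (T%:R : R).
  apply: (@squeeze_cvgr _ _ _ _ (fun=> 0) (fun T => r T * r T)); last 2 first.
  - exact: cvg_cst.
  - by rewrite -(mulr0 0); apply: cvgM.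
  apply: filterS (nbhs_infty_gt 0) => T /= T_gt0.
  rewrite mmp_tv_ge0 /r -expr2 expr_div_n sqr_sqrtr ?ler0n //.
  exact: mmp_tv_le_card (feasible T T_gt0).
move=> eps eps_gt0; near=> T => u.
have T_gt0 : (0 < T)%N by near: T; exact: nbhs_infty_gt.
have T_large : eps^-1 < T%:R :> R by near: T; exact: nbhs_infty_gtr.
have feasT := feasible T T_gt0.
have xu01 : 0 <= xstar_u (E T) (x T) u <= 1.
  rewrite sumr_ge0 => [|v /(x_ge0 feasT)] //=.
  by case: feasT => _ _ _ _ /(_ u).
rewrite (mmp_marg_eq T_gt0 feasT) opprB addrC addrA subrK distrC.
apply: le_lt_trans (norm_expR_approx T_gt0 xu01) _.
by rewrite -[eps]invrK ltf_pV2 ?posrE ?ltr0n ?invr_gt0.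
Unshelve. all: end_near.
Qed.
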